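(* Let $E$ be a set and $\sigma = (\sigma_I)_{I \in \mathcal{F}(E)}$ a virtual permutation of $E$. Let $x, y \in E$. Then exactly one of the following holds: (a) for every finite $I \subset E$ containing $x$ and $y$, the elements $x$ and $y$ lie in the same cycle of $\sigma_I$; (b) for every finite $I \subset E$ containing $x$ and $y$, the elements $x$ and $y$ lie in different cycles of $\sigma_I$. Moreover, the relation ''$x$ and $y$ satisfy (a)'' is an equivalence relation on $E$.
   Context: $\mathcal{F}(E)$ denotes the set of finite subsets of $E$, and $\Sigma_I$ the symmetric group of a finite set $I$. For finite $I \subset J$ and a permutation $\tau$ of $J$, ''removing the elements of $J\setminus I$ from the cycle structure of $\tau$'' produces the permutation $\pi_{J,I}(\tau)$ of $I$ defined by $\pi_{J,I}(\tau)(x) = \tau^m(x)$ where $m \geq 1$ is the smallest integer with $\tau^m(x) \in I$. A virtual permutation of $E$ is a family $(\sigma_I)_{I \in \mathcal{F}(E)}$ with $\sigma_I \in \Sigma_I$ and $\sigma_I = \pi_{J,I}(\sigma_J)$ whenever $I \subset J$ are finite subsets of $E$. *)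

From mathcomp Require Import all_boot.
From mathcomp Require Import boolp classical_sets cardinality.
Set Implicit Arguments. Unset Strict Implicit. Unset Printing Implicit Defensive.
Local Open Scope classical_set_scope.

(* A permutation of I is represented by a function f : E -> E whose
   restriction to I is a bijection of I (values outside I are irrelevant). *)
Definition is_perm_of {E : Type} (I : set E) (f : E -> E) : Prop :=
  (forall x, I x -> I (f x)) /\
  (forall x y, I x -> I y -> f x = f y -> x = y) /\
  (forall y, I y -> exists2 x, I x & f x = y).

Definition first_return {E : Type} (I : set E) (tau : E -> E) (x : E) (z : E) : Prop :=
  exists m : nat, (0 < m)%N /\ I (iter m tau x) /\
    (forall k : nat, (0 < k)%N -> (k < m)%N -> ~ I (iter k tau x)) /\
    z = iter m tau x.

Definition virtual_permutation {E : Type} (sigma : set E -> E -> E) : Prop :=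
  (forall I : set E, finite_set I -> is_perm_of I (sigma I)) /\
  (forall I J : set E, finite_set I -> finite_set J -> I `<=` J ->
     forall x, I x -> first_return I (sigma J) x (sigma I x)).

Definition same_cycle {E : Type} (f : E -> E) (x y : E) : Prop :=
  exists k : nat, iter k f x = y.

Definition cycle_related {E : Type} (sigma : set E -> E -> E) (x y : E) : Prop :=
  forall I : set E, finite_set I -> I x -> I y -> same_cycle (sigma I) x y.

(* Removing points from a cycle structure never merges or splits cycles: the
   first-return map of tau on I follows the orbits of tau, so for x, y in
   I c J, x and y share a sigma_I-cycle iff they share a sigma_J-cycle.  Any
   two finite sets containing x and y are compared through their union, which
   gives the dichotomy; symmetry comes from the periodicity of permutations of
   finite sets, and transitivity from adding the middle point to I. *)
From mathcomp Require Import all_boot.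
From mathcomp Require Import boolp classical_sets cardinality.
From mathcomp Require Import zify.
Set Implicit Arguments. Unset Strict Implicit. Unset Printing Implicit Defensive.
Local Open Scope classical_set_scope.

Section PermOfFiniteSet.
Variables (E : Type) (I : set E) (f : E -> E).
Hypothesis f_perm : is_perm_of I f.

Lemma perm_iter_mem x k : I x -> I (iter k f x).
Proof. by case: f_perm => f_mem _ Ix; elim: k => [|k IH] //=; exact: f_mem. Qed.

Lemma perm_iter_inj k x y : I x -> I y -> iter k f x = iter k f y -> x = y.
Proof.
case: f_perm => _ [f_inj _]; elim: k x y => [|k IH] x y Ix Iy //= e.
by apply: IH => //; apply: f_inj e; exact: perm_iter_mem.
Qed.

Lemma perm_iter_periodic x : finite_set I -> I x ->
  exists2 p, (0 < p)%N & iter p f x = x.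
Proof.
move=> fin_I Ix.
have [[i [j [lt_ij eq_ij]]]|] :=
  pselect (exists i j, (i < j)%N /\ iter i f x = iter j f x).
  exists (j - i)%N; first by rewrite subn_gt0.
  apply: (@perm_iter_inj i) => //; first exact: perm_iter_mem.
  by rewrite -iterD subnKC ?eq_ij // ltnW.
move=> no_repeat; exfalso; apply: infinite_nat.
have -> : [set: nat] = (fun k => iter k f x) @^-1` I.
  by apply/seteqP; split=> k //= _; exact: perm_iter_mem.
apply: finite_preimage => // i j _ _ eq_ij.
by case: (ltngtP i j) => // lt_ij; case: no_repeat; [exists i, j | exists j, i].
Qed.

Lemma same_cycle_sym x y : finite_set I -> I x ->
  same_cycle f x y -> same_cycle f y x.
Proof.
move=> fin_I Ix [k <-]; have [p p_gt0 fix_x] := perm_iter_periodic fin_I Ix.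
have fix_kx : iter (k * p) f x = x.
  by elim: k {fix_x}(fix_x) => [|k IH] e //; rewrite mulSn iterD IH.
by exists (k * p - k)%N; rewrite -iterD subnK // leq_pmulr.
Qed.

End PermOfFiniteSet.

Lemma same_cycle_refl (E : Type) (f : E -> E) x : same_cycle f x x.
Proof. by exists 0%N. Qed.

Lemma same_cycle_trans (E : Type) (f : E -> E) x y z :
  same_cycle f x y -> same_cycle f y z -> same_cycle f x z.
Proof. by case=> k <- [l <-]; exists (l + k)%N; rewrite iterD. Qed.

Section FirstReturn.
Variables (E : Type) (I : set E) (tau f : E -> E).
Hypothesis f_return : forall x, I x -> first_return I tau x (f x).

Lemma first_return_mem x : I x -> I (f x).
Proof. by move=> /f_return [m [_ [Im [_ ->]]]]. Qed.

Lemma iter_first_return x k : I x -> exists m, iter k f x = iter m tau x.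
Proof.
move=> Ix; elim: k => [|k [m IH]]; first by exists 0%N.
have : I (iter k f x) by elim: k {IH} => [|k IHk] //=; exact: first_return_mem.
rewrite iterS => /f_return [m' [_ [_ [_ ->]]]].
by exists (m' + m)%N; rewrite iterD -IH.
Qed.

(* Strong induction on the number of tau-steps: the first of them that lands
   in I is exactly one step of f. *)
Lemma same_cycle_first_return x y : I x -> I y ->
  same_cycle tau x y -> same_cycle f x y.
Proof.
move=> + Iy [k]; elim/ltn_ind: k x => -[|k] IH x Ix tau_xy.
  by rewrite -tau_xy; exact: same_cycle_refl.
have [m [m_gt0 [_ [m_min fx_def]]]] := f_return Ix.
have le_mk : (m <= k.+1)%N.
  by rewrite leqNgt; apply/negP => lt_km; apply: (m_min k.+1); rewrite ?tau_xy.
have [l <-] : same_cycle f (f x) y.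
  apply: (IH (k.+1 - m)%N); first by lia.
    exact: first_return_mem.
  by rewrite fx_def -iterD subnK.
by exists l.+1; rewrite iterSr.
Qed.

Lemma same_cycle_first_returnE x y : I x -> I y ->
  same_cycle f x y <-> same_cycle tau x y.
Proof.
move=> Ix Iy; split; last exact: same_cycle_first_return.
by case=> k <-; have [m ->] := iter_first_return k Ix; exists m.
Qed.

End FirstReturn.

Section VirtualPermutation.
Variables (E : Type) (sigma : set E -> E -> E).
Hypothesis sigma_vp : virtual_permutation sigma.

Lemma same_cycle_sub I J x y : finite_set I -> finite_set J -> I `<=` J ->
  I x -> I y -> same_cycle (sigma I) x y <-> same_cycle (sigma J) x y.
Proof.
move=> fin_I fin_J sub_IJ; apply: same_cycle_first_returnE.
exact: (proj2 sigma_vp I J fin_I fin_J sub_IJ).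
Qed.

Lemma same_cycle_transfer I J x y : finite_set I -> finite_set J ->
  I x -> I y -> J x -> J y ->
  same_cycle (sigma I) x y -> same_cycle (sigma J) x y.
Proof.
move=> fin_I fin_J Ix Iy Jx Jy.
have fin_IJ : finite_set (I `|` J) by rewrite finite_setU.
rewrite (same_cycle_sub fin_I fin_IJ (@subsetUl _ I J)) //.
by rewrite (same_cycle_sub fin_J fin_IJ (@subsetUr _ I J)).
Qed.

Lemma cycle_related_dichotomy x y :
  cycle_related sigma x y \/
  forall I, finite_set I -> I x -> I y -> ~ same_cycle (sigma I) x y.
Proof.
have [[I0 [fin_I0 [I0x [I0y I0_xy]]]]|none] := pselect (exists I0, finite_set I0
    /\ I0 x /\ I0 y /\ same_cycle (sigma I0) x y).
  by left=> I fin_I Ix Iy; exact: (same_cycle_transfer fin_I0 fin_I).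
by right=> I fin_I Ix Iy I_xy; apply: none; exists I.
Qed.

Lemma cycle_related_sym x y : cycle_related sigma x y -> cycle_related sigma y x.
Proof.
move=> rel_xy I fin_I Iy Ix.
exact: (same_cycle_sym (proj1 sigma_vp I fin_I) fin_I Ix (rel_xy I fin_I Ix Iy)).
Qed.

Lemma cycle_related_trans x y z :
  cycle_related sigma x y -> cycle_related sigma y z -> cycle_related sigma x z.
Proof.
move=> rel_xy rel_yz I fin_I Ix Iz.
have fin_Iy : finite_set (I `|` [set y]) by rewrite finite_setU; split.
rewrite (same_cycle_sub fin_I fin_Iy (@subsetUl _ I [set y])) //.
by apply: (same_cycle_trans (rel_xy _ fin_Iy _ _) (rel_yz _ fin_Iy _ _));
  by [left|right].
Qed.

End VirtualPermutation.

Theorem proposition2p5 (E : Type) (sigma : set E -> E -> E) :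
  virtual_permutation sigma ->
  (forall x y : E,
     let A := forall I : set E, finite_set I -> I x -> I y ->
                same_cycle (sigma I) x y in
     let B := forall I : set E, finite_set I -> I x -> I y ->
                ~ same_cycle (sigma I) x y in
     (A \/ B) /\ ~ (A /\ B)) /\
  ((forall x : E, cycle_related sigma x x) /\
   (forall x y : E, cycle_related sigma x y -> cycle_related sigma y x) /\
   (forall x y z : E, cycle_related sigma x y -> cycle_related sigma y z ->
      cycle_related sigma x z)).
Proof.
move=> sigma_vp; split; last first.
  split; first by move=> x I _ _ _; exact: same_cycle_refl.
  by split; [exact: cycle_related_sym | exact: cycle_related_trans].
move=> x y A B; split; first exact: cycle_related_dichotomy.
case=> rel_xy not_rel_xy; have fin_xy := finite_set2 x y.
by apply: (not_rel_xy _ fin_xy _ _ (rel_xy _ fin_xy _ _)); by [left|right].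
Qed.
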